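(* Let $(M,\le)$ be a finite ordered monoid, $G\subseteq M$ a generating set and $eval:G^*\to M$ the natural evaluation morphism. Suppose there are words $u,v,w_1,w_2\in G^*$ such that (i) $u=w_1w_2$; (ii) $v$ is a shuffle of $w_1$ and $w_2$; (iii) $eval(u)$ is idempotent; (iv) $eval(uvu)\not\le eval(u)$. Then $N^1(M)=\Omega(n)$.
   Context: $v$ is a shuffle of $w_1$ and $w_2$ if there exist $k\ge0$ and words $w_{1,1},\dots,w_{1,k},w_{2,1},\dots,w_{2,k}\in G^*$ (possibly empty) with $w_1=w_{1,1}\cdots w_{1,k}$, $w_2=w_{2,1}\cdots w_{2,k}$ and $v=w_{1,1}w_{2,1}w_{1,2}w_{2,2}\cdots w_{1,k}w_{2,k}$. An element $e$ is idempotent if $ee=e$. A finite ordered monoid is a finite monoid with a partial order such that $x\le y\Rightarrow zx\le zy$ and $xz\le yz$. Non-deterministic communication complexity: for $f:X\times Y\to\{0,1\}$, $N^1(f)$ is the minimum cost of a non-deterministic protocol for $f$; equivalently, up to an additive constant 2, $N^1(f)=\log_2 C^1(f)$, where $C^1(f)$ is the minimum number of rectangles $S\times T$ on which $f\equiv1$ whose union is $f^{-1}(1)$. An order ideal is a subset $I\subseteq M$ with $y\in I, x\le y\Rightarrow x\in I$. For an order ideal $I$, $N^1(M,I)(n)$ is $N^1$ of the function where Alice receives $m_1,m_3,\dots,m_{2n-1}\in M$, Bob receives $m_2,\dots,m_{2n}\in M$, with value $1$ iff $m_1\cdots m_{2n}\in I$; $N^1(M)(n)=\max_I N^1(M,I)(n)$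 over all order ideals. Asymptotics are as $n\to\infty$. *)

From mathcomp Require Import all_boot.
Set Implicit Arguments. Unset Strict Implicit. Unset Printing Implicit Defensive.

Definition is_monoid (M : Type) (mul : M -> M -> M) (one : M) : Prop :=
  [/\ associative mul, left_id one mul & right_id one mul].

Definition is_ordered_monoid (M : Type) (mul : M -> M -> M) (one : M)
    (le : rel M) : Prop :=
  [/\ is_monoid mul one,
      reflexive le, antisymmetric le, transitive le &
      forall x y z, le x y -> le (mul z x) (mul z y) /\ le (mul x z) (mul y z)].

Definition word_over (M : finType) (G : {set M}) (w : seq M) : bool :=
  all (fun g => g \in G) w.

Definition eval (M : Type) (mul : M -> M -> M) (one : M) (w : seq M) : M :=
  foldr mul one w.

Definition generates (M : finType) (mul : M -> M -> M) (one : M) (G : {set M}) : Prop :=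
  forall m : M, exists w, word_over G w /\ eval mul one w = m.

(* v is a shuffle of w1 and w2 (k = size s1 = size s2 blocks, possibly empty). *)
Definition shuffle (T : Type) (v w1 w2 : seq T) : Prop :=
  exists (s1 s2 : seq (seq T)),
    [/\ size s1 = size s2, w1 = flatten s1, w2 = flatten s2 &
        v = flatten [seq p.1 ++ p.2 | p <- zip s1 s2]].

Definition one_cover (X Y : finType) (f : X -> Y -> bool)
    (rs : {set ({set X} * {set Y})}) : bool :=
  [forall r in rs, forall x in r.1, forall y in r.2, f x y] &&
  [forall x, forall y, f x y ==> [exists r in rs, (x \in r.1) && (y \in r.2)]].

(* C^1(f): minimum size of a 1-cover.  The default value of the min is the
   size of the cover by singleton rectangles, which is itself a 1-cover,
   so this is exactly the minimum. *)
Definition C1 (X Y : finType) (f : X -> Y -> bool) : nat :=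
  \big[minn/#|[set xy : X * Y | f xy.1 xy.2]|]_(rs | one_cover f rs) #|rs|.

(* N^1(f) = log2 C^1(f) (up to the additive constant allowed by the paper). *)
Definition N1 (X Y : finType) (f : X -> Y -> bool) : nat := trunc_log 2 (C1 f).

Definition order_ideal (M : finType) (le : rel M) (I : {set M}) : bool :=
  [forall y in I, forall x, le x y ==> (x \in I)].

(* Alice holds a = (m1, m3, ..., m_{2n-1}), Bob holds b = (m2, ..., m_{2n});
   the product m1 m2 ... m_{2n}. *)
Definition interleaved_prod (M : finType) (mul : M -> M -> M) (one : M) (n : nat)
    (a b : {ffun 'I_n -> M}) : M :=
  foldr (fun i acc => mul (mul (a i) (b i)) acc) one (enum 'I_n).

Definition N1MI (M : finType) (mul : M -> M -> M) (one : M) (I : {set M})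
    (n : nat) : nat :=
  N1 (fun a b : {ffun 'I_n -> M} => interleaved_prod mul one a b \in I).

Definition N1M (M : finType) (mul : M -> M -> M) (one : M) (le : rel M)
    (n : nat) : nat :=
  \max_(I : {set M} | order_ideal le I) N1MI mul one I n.

From mathcomp Require Import all_boot zify.
Set Implicit Arguments. Unset Strict Implicit. Unset Printing Implicit Defensive.

(* Let e = eval u = x y with
   x = eval w1, y = eval w2; the shuffle gives letters a_i, b_i (evaluations
   of its blocks) with x = a_1..a_k, y = b_1..b_k and P := eval v =
   a_1 b_1 .. a_k b_k, and q := e P e = eval (uvu) is not below e.
   Reduction: for each bit Alice plays the block  e a_1 .. a_k 1  (bit 1) or
   e x 1 .. 1 1  (bit 0), Bob plays  1 b_1 .. b_k e  or  1 1 .. 1 y e.  An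
   interleaved block evaluates to q if both bits are 1 and to e otherwise,
   so for I = {z | z <= e} disjoint strings land in I and strings meeting
   once do not.  Counting: a rectangle with no pair meeting exactly once
   holds at most 2^m of the 3^m disjoint pairs, so C^1 >= (3/2)^m and
   N^1 >= m/2 - 1, with m = n / (k+2). *)

Fixpoint bitseqs (m : nat) : seq (seq bool) :=
  if m is m'.+1 then [seq false :: s | s <- bitseqs m'] ++ [seq true :: s | s <- bitseqs m']
  else [:: [::]].

Fixpoint common_ones (s t : seq bool) : nat :=
  if (s, t) is (a :: s', b :: t') then (a && b) + common_ones s' t' else 0.

Lemma bitseqsS m :
  bitseqs m.+1 = [seq false :: s | s <- bitseqs m] ++ [seq true :: s | s <- bitseqs m].
Proof. by []. Qed.

Lemma mem_bitseqs m s : (s \in bitseqs m) = (size s == m).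
Proof.
elim: m s => [|m IH] [|b s] //=; rewrite mem_cat.
  by apply/negbTE; rewrite negb_or; apply/andP; split; apply/mapP => -[].
have cons_inj (c : bool) : injective (cons c) by move=> ? ? [].
have not_mem (c : bool) l : (c :: s \in [seq ~~ c :: r | r <- l]) = false.
  by apply/mapP => -[? _ [/eqP]]; rewrite eq_sym; case: c.
rewrite eqSS -IH; case: b; rewrite (mem_map (cons_inj _)).
  by rewrite (not_mem true).
by rewrite (not_mem false) orbF.
Qed.

Definition disjoint_pairs m (A B : pred (seq bool)) : nat :=
  \sum_(s <- bitseqs m) \sum_(t <- bitseqs m) [&& A s, B t & common_ones s t == 0].

Lemma leq_sum_seq (I : eqType) (r : seq I) (F G : I -> nat) :
  (forall i, i \in r -> F i <= G i) -> \sum_(i <- r) F i <= \sum_(i <- r) G i.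
Proof. by move=> FG; rewrite big_seq [X in _ <= X]big_seq; apply: leq_sum. Qed.

(* With Ai, Bi the sections of A, B at first bit i, the
   disjoint pairs of A x B are bounded by those of (A0 u A1) x B0 plus those
   of A0 x (B0 u B1): pointwise this can only fail when s is in A1 and t in
   B1, but then (1s, 1t) would share exactly one 1. *)
Lemma rectangle_disjoint_pairs m (A B : pred (seq bool)) :
  (forall s t, size s = m -> size t = m -> A s -> B t -> common_ones s t != 1) ->
  disjoint_pairs m A B <= 2 ^ m.
Proof.
elim: m A B => [|m IH] A B AB.
  by rewrite /disjoint_pairs /= !big_cons !big_nil /=; case: (A _); case: (B _).
pose A0 s := A (false :: s); pose A1 s := A (true :: s).
pose B0 t := B (false :: t); pose B1 t := B (true :: t).
have bound0 : disjoint_pairs m (predU A0 A1) B0 <= 2 ^ m.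
  apply: IH => s t hs ht /orP [] ha hb.
    by have := AB (false :: s) (false :: t); rewrite /= hs ht; apply.
  by have := AB (true :: s) (false :: t); rewrite /= hs ht; apply.
have bound1 : disjoint_pairs m A0 (predU B0 B1) <= 2 ^ m.
  apply: IH => s t hs ht ha /orP [] hb.
    by have := AB (false :: s) (false :: t); rewrite /= hs ht; apply.
  by have := AB (false :: s) (true :: t); rewrite /= hs ht; apply.
rewrite expnS mul2n -addnn; apply: leq_trans (leq_add bound0 bound1).
rewrite /disjoint_pairs bitseqsS big_cat /= !big_map -big_split /= -big_split /=.
apply: leq_sum_seq => s; rewrite mem_bitseqs => /eqP hs.
rewrite !big_cat /= !big_map -!big_split /=; apply: leq_sum_seq => t.
rewrite mem_bitseqs => /eqP ht.
have := AB (true :: s) (true :: t); rewrite /= hs ht add1n eqSS => /(_ erefl erefl).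
rewrite /A0 /A1 /B0 /B1 /=.
by case: (A (true :: s)); case: (A (false :: s)); case: (B (true :: t));
  case: (B (false :: t)); case: (common_ones s t == 0) => // /(_ isT isT).
Qed.

(* There are 3^m disjoint pairs: each position is (0,0), (0,1) or (1,0). *)
Lemma disjoint_pairs_total m : disjoint_pairs m predT predT = 3 ^ m.
Proof.
elim: m => [|m IH]; first by rewrite /disjoint_pairs /= !big_cons !big_nil.
pose D s := \sum_(t <- bitseqs m) (common_ones s t == 0).
have row0 s : \sum_(t <- bitseqs m.+1) (common_ones (false :: s) t == 0) = D s + D s.
  by rewrite bitseqsS big_cat /= !big_map.
have row1 s : \sum_(t <- bitseqs m.+1) (common_ones (true :: s) t == 0) = D s.
  by rewrite bitseqsS big_cat /= !big_map [X in _ + X]big1 ?addn0.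
rewrite /disjoint_pairs bitseqsS big_cat !big_map /=.
under eq_bigr do rewrite row0; under [X in _ + X]eq_bigr do rewrite row1.
rewrite big_split /= -/(disjoint_pairs m predT predT) IH.
by rewrite expnS; lia.
Qed.

Lemma C1_cover (X Y : finType) (f : X -> Y -> bool) :
  exists2 rs, one_cover f rs & #|rs| <= C1 f.
Proof.
rewrite /C1; apply: (big_ind (fun c => exists2 rs, one_cover f rs & #|rs| <= c)).
- pose singletons := [set ([set xy.1], [set xy.2]) | xy in [set xy : X * Y | f xy.1 xy.2]].
  exists singletons; last exact: leq_imset_card.
  apply/andP; split.
    apply/forall_inP => r /imsetP [[a b]]; rewrite inE /= => fab ->.
    by apply/forall_inP => x; rewrite inE => /eqP ->; apply/forall_inP => y; rewrite inE => /eqP ->.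
  apply/forallP => x; apply/forallP => y; apply/implyP => fxy.
  apply/existsP; exists ([set x], [set y]); rewrite /= !inE !eqxx !andbT.
  by apply/imsetP; exists (x, y); rewrite ?inE.
- move=> a b [rs cov ha] [rs' cov' hb].
  by case: leqP => _; [exists rs | exists rs'].
- by move=> rs cov; exists rs.
Qed.

(* If f is 1 on the images of disjoint pairs and 0 on the images of pairs
   meeting in exactly one position, every rectangle of a 1-cover holds at most
   2^m of the 3^m disjoint pairs, so C^1(f) 2^m >= 3^m. *)
Lemma C1_promise_bound (X Y : finType) (f : X -> Y -> bool) m
    (phi : seq bool -> X) (psi : seq bool -> Y) :
  (forall s t, size s = m -> size t = m -> common_ones s t = 0 -> f (phi s) (psi t)) ->
  (forall s t, size s = m -> size t = m -> common_ones s t = 1 -> ~~ f (phi s) (psi t)) ->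
  3 ^ m <= C1 f * 2 ^ m.
Proof.
move=> f_disj f_one; have [rs /andP [/forall_inP mono /forallP covers] size_rs] := C1_cover f.
pose inside (r : {set X} * {set Y}) :=
  disjoint_pairs m (fun s => phi s \in r.1) (fun t => psi t \in r.2).
apply: (@leq_trans (\sum_(r in rs) inside r)).
  rewrite -disjoint_pairs_total /inside /disjoint_pairs [X in _ <= X]exchange_big /=.
  apply: leq_sum_seq => s; rewrite mem_bitseqs => /eqP hs.
  rewrite [X in _ <= X]exchange_big /=; apply: leq_sum_seq => t; rewrite mem_bitseqs => /eqP ht.
  case: eqP => //= disj.
  have /existsP [r /andP [r_rs /andP [in1 in2]]] :=
    implyP (forallP (covers (phi s)) (psi t)) (f_disj s t hs ht disj).
  by rewrite (bigD1 r) //= in1 in2.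
apply: (@leq_trans (\sum_(r in rs) 2 ^ m)); last by rewrite sum_nat_const leq_mul2r size_rs orbT.
apply: leq_sum => r r_rs; apply: rectangle_disjoint_pairs => s t hs ht in1 in2.
apply/eqP => one; have := f_one s t hs ht one.
by have /forall_inP /(_ _ in1) /forall_inP /(_ _ in2) -> := mono r r_rs.
Qed.

(* From 3^m <= c 2^m it follows that 2^m <= c^2, hence m/2 < log2 c + 1. *)
Lemma trunc_log_lower_bound m c : 3 ^ m <= c * 2 ^ m -> m < 2 * (trunc_log 2 c).+1.
Proof.
move=> h3; set t := trunc_log 2 c.
have lt3 : 3 ^ m < 2 ^ t.+1 * 2 ^ m.
  by apply: leq_ltn_trans h3 _; rewrite ltn_pmul2r ?expn_gt0 ?trunc_log_ltn.
have lt9 : 2 ^ m * 4 ^ m < 4 ^ t.+1 * 4 ^ m.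
  have -> : 4 ^ t.+1 * 4 ^ m = (2 ^ t.+1 * 2 ^ m) * (2 ^ t.+1 * 2 ^ m).
    by rewrite mulnACA -!expnMn.
  apply: leq_ltn_trans (ltn_mul lt3 lt3).
  by case: (posnP m) => [-> // | m_gt0]; rewrite -!expnMn leq_exp2r.
rewrite ltn_pmul2r ?expn_gt0 // in lt9.
by rewrite -(ltn_exp2l _ _ (ltnSn 1)) expnM.
Qed.

Section MonoidWords.
Variables (M : Type) (mul : M -> M -> M) (one : M).
Hypotheses (mulA : associative mul) (mul1m : left_id one mul) (mulm1 : right_id one mul).
Local Notation eval := (eval mul one).

Definition zipmul (a b : seq M) : seq M := [seq mul p.1 p.2 | p <- zip a b].

Lemma eval_cat s1 s2 : eval (s1 ++ s2) = mul (eval s1) (eval s2).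
Proof. by elim: s1 => [|c s1 IH] /=; rewrite ?mul1m // -mulA -IH. Qed.

Lemma eval_flatten L : eval (flatten L) = eval (map eval L).
Proof. by elim: L => //= s L IH; rewrite eval_cat IH. Qed.

Lemma eval_nseq_one k : eval (nseq k one) = one.
Proof. by elim: k => //= k ->; rewrite mul1m. Qed.

Lemma zipmul_cat a1 a2 b1 b2 : size a1 = size b1 ->
  zipmul (a1 ++ a2) (b1 ++ b2) = zipmul a1 b1 ++ zipmul a2 b2.
Proof. by move=> size1; rewrite /zipmul zip_cat // map_cat. Qed.

Lemma zipmul_nseq_oner a : zipmul a (nseq (size a) one) = a.
Proof. by rewrite /zipmul; elim: a => //= c a ->; rewrite mulm1. Qed.

Lemma zipmul_nseq_onel b : zipmul (nseq (size b) one) b = b.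
Proof. by rewrite /zipmul; elim: b => //= c b ->; rewrite mul1m. Qed.

Lemma eval_shuffle v w1 w2 : shuffle v w1 w2 ->
  exists al bl, [/\ size al = size bl, eval w1 = eval al, eval w2 = eval bl
                  & eval v = eval (zipmul al bl)].
Proof.
move=> [s1 [s2 [size12 -> -> ->]]].
exists (map eval s1), (map eval s2); split; rewrite ?size_map ?eval_flatten //.
by elim: s1 s2 {size12} => [|a s1 IH] [|b s2] //=; rewrite !eval_cat IH.
Qed.

Definition pattern_word (e q : M) (s t : seq bool) : seq M :=
  [seq if p.1 && p.2 then q else e | p <- zip s t].

Lemma eval_pattern_word e q s t :
  mul e e = e -> mul e q = q -> mul q e = q ->
  0 < size s -> size s = size t -> common_ones s t <= 1 ->
  eval (pattern_word e q s t) = if common_ones s t == 0 then e else q.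
Proof.
move=> ee eq qe; rewrite /pattern_word.
have absorbed s' t' : size s' = size t' -> common_ones s' t' <= 1 ->
    mul e (eval [seq if p.1 && p.2 then q else e | p <- zip s' t']) =
    if common_ones s' t' == 0 then e else q.
  elim: s' t' => [|a s' IH] [|b t'] //=.
  case=> /IH {}IH; case: (a && b) => /=; rewrite ?add1n ?add0n ?ltnS ?leqn0 => one_common.
    by rewrite mulA eq -{1}qe -mulA IH (eqP one_common).
  by rewrite mulA ee IH.
case: s t => [|a s] [|b t] // _ size_st one_le; rewrite -absorbed //.
by rewrite /= mulA; case: (a && b); rewrite ?eq ?ee.
Qed.

Section BlockEncoding.
Variables (al bl : seq M) (e : M).
Hypotheses (size_al_bl : size al = size bl) (e_split : e = mul (eval al) (eval bl))
  (e_idem : mul e e = e).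

Definition alice_block (a : bool) : seq M :=
  (if a then e else mul e (eval al)) :: (if a then al else nseq (size al) one) ++ [:: one].

Definition bob_block (b : bool) : seq M :=
  one :: (if b then bl else nseq (size bl) one) ++ [:: if b then e else mul (eval bl) e].

Lemma size_alice_block a : size (alice_block a) = (size al).+2.
Proof. by case: a; rewrite /= size_cat ?size_nseq addn1. Qed.

Lemma size_bob_block b : size (bob_block b) = (size al).+2.
Proof. by case: b; rewrite /= size_cat ?size_nseq addn1 size_al_bl. Qed.

(* An interleaved block is e P e when both bits are 1, and e otherwise
   (e.g. e x * y e = e when Alice's bit is 1 and Bob's is 0). *)
Lemma eval_block a b :
  eval (zipmul (alice_block a) (bob_block b)) =
  if a && b then mul (mul e (eval (zipmul al bl))) e else e.
Proof.
have frame l1 l2 c d u w : size l1 = size l2 ->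
    eval (zipmul (c :: l1 ++ [:: u]) (d :: l2 ++ [:: w])) =
    mul (mul c d) (mul (eval (zipmul l1 l2)) (mul u w)).
  by move=> size12; rewrite -[c :: _]cat1s -[d :: _]cat1s !zipmul_cat // !eval_cat /= !mulm1.
have exy : mul (eval al) (mul (eval bl) e) = e by rewrite mulA -e_split e_idem.
rewrite /alice_block /bob_block; case: a; case: b; rewrite frame ?size_nseq //=.
- by rewrite mulm1 mul1m mulA.
- by rewrite -size_al_bl zipmul_nseq_oner mulm1 mul1m exy e_idem.
- by rewrite size_al_bl zipmul_nseq_onel mulm1 mul1m -mulA exy e_idem.
- rewrite size_al_bl -{2}(size_nseq (size bl) one) zipmul_nseq_oner eval_nseq_one.
  by rewrite mulm1 !mul1m -mulA exy e_idem.
Qed.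

Definition alice_word (s : seq bool) : seq M := flatten (map alice_block s).
Definition bob_word (t : seq bool) : seq M := flatten (map bob_block t).

Lemma size_alice_word s : size (alice_word s) = size s * (size al).+2.
Proof. by elim: s => // a s IH; rewrite size_cat size_alice_block IH mulSn. Qed.

Lemma size_bob_word t : size (bob_word t) = size t * (size al).+2.
Proof. by elim: t => // b t IH; rewrite size_cat size_bob_block IH mulSn. Qed.

Lemma eval_words s t : size s = size t ->
  eval (zipmul (alice_word s) (bob_word t)) =
  eval (pattern_word e (mul (mul e (eval (zipmul al bl))) e) s t).
Proof.
elim: s t => [|a s IH] [|b t] // [/IH {}IH].
by rewrite zipmul_cat ?size_alice_block ?size_bob_block // eval_cat eval_block IH.
Qed.
End BlockEncoding.
End MonoidWords.

Lemma interleaved_prod_nth (M : finType) (mul : M -> M -> M) (one : M) n (a b : seq M) :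
  left_id one mul -> size a = size b -> size a <= n ->
  interleaved_prod mul one [ffun i : 'I_n => nth one a i] [ffun i : 'I_n => nth one b i] =
  eval mul one (zipmul mul a b).
Proof.
move=> mul1m size_ab size_n; pose c i := mul (nth one a i) (nth one b i).
have -> : interleaved_prod mul one [ffun i : 'I_n => nth one a i] [ffun i : 'I_n => nth one b i] =
          eval mul one (map c (iota 0 n)).
  rewrite /interleaved_prod /eval -val_enum_ord foldr_map.
  by elim: (enum 'I_n) => //= i l ->; rewrite !ffunE.
have head : map c (iota 0 (size a)) = zipmul mul a b.
  apply: (@eq_from_nth _ one);
    rewrite size_map size_iota /zipmul ?size_map ?size_zip -?size_ab ?minnn // => i lt_i.
  rewrite (nth_map 0) ?size_iota // (nth_map (one, one)) ?size_zip -?size_ab ?minnn //.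
  by rewrite nth_zip // nth_iota.
have tail : map c (iota (size a) (n - size a)) = nseq (n - size a) one.
  apply: (@eq_from_nth _ one); rewrite size_map size_iota ?size_nseq // => i lt_i.
  rewrite (nth_map 0) ?size_iota // nth_iota // nth_nseq lt_i /c.
  by rewrite !nth_default ?mul1m // -?size_ab leq_addr.
rewrite -(subnKC size_n) iotaD map_cat add0n head tail /eval foldr_cat.
by rewrite -/(eval mul one (nseq _ _)) (eval_nseq_one mul1m).
Qed.

(* The reduction: with I containing e but not q = e P e, the function of
   N^1(M, I)(n) separates the disjoint pairs of length m = n / (k+2) from
   those meeting once, whence m < 2 (N^1(M, I)(n) + 1). *)
Lemma N1MI_lower (M : finType) (mul : M -> M -> M) (one : M) (I : {set M})
    (al bl : seq M) (e : M) (n : nat) :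
  associative mul -> left_id one mul -> right_id one mul ->
  size al = size bl -> e = mul (eval mul one al) (eval mul one bl) -> mul e e = e ->
  e \in I -> mul (mul e (eval mul one (zipmul mul al bl))) e \notin I ->
  0 < n %/ (size al).+2 ->
  n %/ (size al).+2 < 2 * (N1MI mul one I n).+1.
Proof.
move=> mulA mul1m mulm1 size_al_bl e_split e_idem e_in q_notin m_gt0.
set m := n %/ _; set q := mul (mul e (eval mul one (zipmul mul al bl))) e.
pose phi s := [ffun i : 'I_n => nth one (alice_word mul one al e s) i].
pose psi t := [ffun i : 'I_n => nth one (bob_word mul one bl e t) i].
have encode s t : size s = m -> size t = m -> common_ones s t <= 1 ->
    interleaved_prod mul one (phi s) (psi t) = if common_ones s t == 0 then e else q.
  move=> size_s size_t one_le.
  rewrite interleaved_prod_nth // ?size_alice_word ?(size_bob_word _ _ _ size_al_bl);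
    rewrite ?size_s ?size_t ?leq_divM //.
  rewrite eval_words ?size_s ?size_t // eval_pattern_word ?size_s ?size_t //.
  - by rewrite /q !mulA e_idem.
  - by rewrite /q -mulA e_idem.
rewrite /N1MI /N1; apply: trunc_log_lower_bound.
apply: (C1_promise_bound (phi := phi) (psi := psi)).
- by move=> s t size_s size_t disj; rewrite encode // disj.
- by move=> s t size_s size_t one_common; rewrite encode ?one_common.
Qed.

(* Apply the reduction to the order ideal {z | z <= eval u}; since
   eval (uvu) = e P e is not below e, we get n / (k+2) = O(N^1(M)(n)). *)
Theorem mainTheorem9 (M : finType) (mul : M -> M -> M) (one : M) (le : rel M)
    (G : {set M}) (u v w1 w2 : seq M) :
  is_ordered_monoid mul one le ->
  generates mul one G ->
  word_over G u -> word_over G v -> word_over G w1 -> word_over G w2 ->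
  u = w1 ++ w2 ->
  shuffle v w1 w2 ->
  mul (eval mul one u) (eval mul one u) = eval mul one u ->
  ~~ le (eval mul one (u ++ v ++ u)) (eval mul one u) ->
  exists (k n0 : nat), 0 < k /\ forall n, n0 <= n -> n <= k * N1M mul one le n.
Proof.
move=> [[mulA mul1m mulm1] le_refl _ le_trans _] _ _ _ _ _ u_split v_shuffle e_idem not_le.
have [al [bl [size_al_bl eval_w1 eval_w2 eval_v]]] := eval_shuffle mulA mul1m v_shuffle.
set e := eval mul one u in e_idem not_le.
have e_split : e = mul (eval mul one al) (eval mul one bl).
  by rewrite /e u_split eval_cat // eval_w1 eval_w2.
pose I := [set z | le z e].
have I_ideal : order_ideal le I.
  apply/forall_inP => z; rewrite inE => z_le.
  by apply/forallP => y; apply/implyP; rewrite inE => /le_trans; apply.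
have e_in : e \in I by rewrite inE le_refl.
have q_notin : mul (mul e (eval mul one (zipmul mul al bl))) e \notin I.
  by rewrite inE -eval_v -mulA -!eval_cat.
set L := (size al).+2.
exists (4 * L), (3 * L); split => // n n_ge.
have m_ge : 3 <= n %/ L by rewrite leq_divRL.
have m_lt := N1MI_lower (n := n) mulA mul1m mulm1 size_al_bl e_split e_idem e_in q_notin
  (ltnW (ltnW m_ge)).
have N_le : N1MI mul one I n <= N1M mul one le n := leq_bigmax_cond I I_ideal.
have n_lt := ltn_ceil n (isT : 0 < L).
(* n < (m + 1) L with 3 <= m < 2 (N + 1), so m + 1 <= 4 N. *)
rewrite -/L in m_lt n_lt; nia.
Qed.
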